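(* Let $S,T\subseteq\{1,\dots,n-1\}$ be nonempty. Let $U_{S,T}=\{s_j-s_i>0 : s_i,s_j\in S\}\cup\{t_j-t_i>0: t_i,t_j\in T\}\cup\{s+t : s\in S, t\in T\}$. Then $\gcd(U_{S,T})=\gcd\{s+t: s\in S, t\in T\}$. *)

From mathcomp Require Import all_boot.
Set Implicit Arguments.
Unset Strict Implicit.

(* Subsets of {1,...,n-1} are represented as S : {set 'I_n} with 0 \notin S.
   The gcd of a finite set X of naturals is \big[gcdn/0] over its elements
   (listing an element several times does not change the gcd). *)

Definition gcd_diffs (n : nat) (S : {set 'I_n}) : nat :=
  \big[gcdn/0]_(i in S) \big[gcdn/0]_(j in S | i < j) (j - i).

Definition gcd_sums (n : nat) (S T : {set 'I_n}) : nat :=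
  \big[gcdn/0]_(s in S) \big[gcdn/0]_(t in T) (s + t).

Definition gcd_U (n : nat) (S T : {set 'I_n}) : nat :=
  gcdn (gcdn (gcd_diffs S) (gcd_diffs T)) (gcd_sums S T).

From mathcomp Require Import all_boot.

(* A difference s_j - s_i equals (s_j + t) - (s_i + t) for any t in T, so the
   gcd of the sums divides every difference; it therefore divides all of
   U_{S,T}, and adjoining the differences does not change the gcd. *)

Lemma dvdn_gcd_sums (n : nat) (S T : {set 'I_n}) (s t : 'I_n) :
  s \in S -> t \in T -> gcd_sums S T %| s + t.
Proof. by move=> Ss Tt; apply: (biggcdn_inf s) => //; apply: (biggcdn_inf t). Qed.

Lemma dvdn_gcd_diffs (n d c : nat) (S : {set 'I_n}) :
  (forall s : 'I_n, s \in S -> d %| s + c) -> d %| gcd_diffs S.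
Proof.
move=> dvd_shift; apply/dvdn_biggcdP => i Si; apply/dvdn_biggcdP => j /andP[Sj _].
by rewrite -(subnDr c); apply: dvdn_sub; apply: dvd_shift.
Qed.

Lemma dvdn_gcd_sums_diffsl (n : nat) (S T : {set 'I_n}) :
  T != set0 -> gcd_sums S T %| gcd_diffs S.
Proof.
by case/set0Pn=> t Tt; apply: (@dvdn_gcd_diffs _ _ t) => s Ss; apply: dvdn_gcd_sums.
Qed.

Lemma dvdn_gcd_sums_diffsr (n : nat) (S T : {set 'I_n}) :
  S != set0 -> gcd_sums S T %| gcd_diffs T.
Proof.
case/set0Pn=> s Ss; apply: (@dvdn_gcd_diffs _ _ s) => t Tt.
by rewrite addnC; apply: dvdn_gcd_sums.
Qed.

Theorem proposition2p2 (n : nat) (S T : {set 'I_n}) :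
  S != set0 -> T != set0 ->
  (forall s : 'I_n, s \in S -> 0 < s) ->
  (forall t : 'I_n, t \in T -> 0 < t) ->
  gcd_U S T = gcd_sums S T.
Proof.
move=> S_neq0 T_neq0 _ _; rewrite /gcd_U; apply/gcdn_idPr.
by rewrite dvdn_gcd dvdn_gcd_sums_diffsl // dvdn_gcd_sums_diffsr.
Qed.
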